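(* Let $n\ge 1$ and let $\mathsf{Q}:\mathbb{R}\to SO(n)$ be a map whose entries are twice continuously differentiable real functions. Define $\mathsf{P}(\tau):=\mathsf{Q}(\tau)^{\mathsf T}\,\mathsf{Q}''(\tau)$. Then for every $\tau\in\mathbb{R}$, every negative eigenvalue of $\operatorname{sym}(\mathsf{P}(\tau))$ (if any exists) has even algebraic multiplicity.
   Context: $\mathsf{Q}''$ denotes the entrywise second derivative of $\mathsf{Q}$; for a square real matrix $\mathsf{A}$, $\operatorname{sym}(\mathsf{A}):=\tfrac12(\mathsf{A}+\mathsf{A}^{\mathsf T})$. *)

From HB Require Import structures.
From mathcomp Require Import all_boot all_order all_algebra.
From mathcomp Require Import all_classical all_reals all_analysis.
Set Implicit Arguments. Unset Strict Implicit. Unset Printing Implicit Defensive.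
Import Order.TTheory GRing.Theory Num.Theory.
Import numFieldNormedType.Exports.
Local Open Scope ring_scope.

Definition in_SO (R : realType) (n : nat) (M : 'M[R]_n) : Prop :=
  M *m M^T = 1%:M /\ \det M = 1.

Definition C2 (R : realType) (f : R -> R) : Prop :=
  (forall x, derivable f x 1) /\
  (forall x, derivable (derive1 f) x 1) /\
  continuous (derive1 (derive1 f)).

Definition mx_second_deriv (R : realType) (n : nat) (Q : R -> 'M[R]_n) (tau : R)
  : 'M[R]_n :=
  \matrix_(i, j) derive1 (derive1 (fun t => Q t i j)) tau.

Definition msym (R : realType) (n : nat) (A : 'M[R]_n) : 'M[R]_n :=
  2^-1 *: (A + A^T).

Definition alg_mult (R : realType) (n : nat) (A : 'M[R]_n) (a : R) : nat :=
  mup a (char_poly A).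

(* Differentiating Q^T Q = 1 twice shows that A := Q^T Q' is skew and that
   sym (Q^T Q'') = - Q'^T Q' = A^2.  For skew A, det (X^2 - A^2) =
   det (X - A) det (X + A) = det (X - A)^2, so char_poly (A^2) composed with X^2
   is a square.  For a < 0 the factor X^2 - a is irreducible over R, and it
   divides that square exactly (mup a (char_poly (A^2))) times, which must
   therefore be even. *)

From HB Require Import structures.
From mathcomp Require Import all_boot all_order all_algebra.
From mathcomp Require Import all_classical all_reals all_analysis.
Import Order.TTheory GRing.Theory Num.Theory.
Import numFieldNormedType.Exports.
Local Open Scope ring_scope.

Set Implicit Arguments.
Unset Strict Implicit.
Unset Printing Implicit Defensive.

Lemma irredp_dvdp_sqr (F : fieldType) (s q : {poly F}) :
  irreducible_poly s -> s %| q ^+ 2 -> s %| q.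
Proof.
move=> s_irr; apply: contraLR.
by rewrite -!irreducible_poly_coprime //; apply: coprimep_expr.
Qed.

Lemma irredp_sqr_expM_even (F : fieldType) (s q f : {poly F}) (m : nat) :
  irreducible_poly s -> coprimep s f -> q ^+ 2 = s ^+ m * f -> ~~ odd m.
Proof.
move=> s_irr sf_coprime; have s_neq0 := irredp_neq0 s_irr.
elim/ltn_ind: m q => -[|m] IH q q2E //.
have /dvdpP [q1 q1E] : s %| q.
  by apply: (irredp_dvdp_sqr s_irr); rewrite q2E exprS -mulrA dvdp_mulr.
move: q2E; rewrite q1E exprMn [s ^+ 2]expr2 mulrA [s ^+ m.+1]exprSr [RHS]mulrAC.
move=> /(mulIf s_neq0); case: m IH => [|m] IH q1sE.
  rewrite expr0 mul1r in q1sE.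
  by move: sf_coprime; rewrite irreducible_poly_coprime // -q1sE dvdp_mull.
rewrite /= negbK; apply: (IH m (leqnSn _) q1).
by apply: (mulIf s_neq0); rewrite q1sE exprSr mulrAC.
Qed.

Lemma irredp_XsqrsubC (R : realFieldType) (a : R) :
  a < 0 -> irreducible_poly ('X^2 - a%:P).
Proof.
move=> a_lt0; apply: cubic_irreducible; first by rewrite size_XnsubC.
move=> x; rewrite rootE !hornerE subr_eq0; apply/eqP => x2E.
by have := sqr_ge0 x; rewrite x2E leNgt a_lt0.
Qed.

Lemma mup_even_of_comp_Xsqr (R : realFieldType) (p q : {poly R}) (a : R) :
  p != 0 -> a < 0 -> p \Po 'X^2 = q ^+ 2 -> ~~ odd (mup a p).
Proof.
move=> p_neq0 a_lt0 pX2E.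
have [m [r]] := multiplicity_XsubC p a; rewrite p_neq0 /= => ra_neq0 pE.
have -> : mup a p = m by rewrite pE mupMr // mup_XsubCX eqxx.
have XaX2E : ('X - a%:P) \Po 'X^2 = 'X^2 - a%:P.
  by rewrite comp_polyB comp_polyX comp_polyC.
apply: (irredp_sqr_expM_even (irredp_XsqrsubC a_lt0)
          (q := q) (f := r \Po 'X^2)).
  by rewrite -XaX2E coprimep_comp_poly // coprimep_sym coprimep_XsubC.
by rewrite -pX2E pE -XaX2E rmorphM rmorphXn mulrC.
Qed.

Lemma char_poly_sqr_comp_skew (R : comNzRingType) n (A : 'M[R]_n) :
  A^T = - A -> char_poly (A *m A) \Po 'X^2 = char_poly A ^+ 2.
Proof.
move=> A_skew; rewrite /char_poly -det_map_mx expr2.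
set AX := map_mx polyC A.
have -> : map_mx (comp_poly 'X^2) (char_poly_mx (A *m A)) =
          ('X%:M - AX) *m ('X%:M + AX).
  rewrite mulmxDr !mulmxBl -scalar_mxM -expr2 scalar_mxC addrA subrK.
  apply/matrixP => i j; rewrite !mxE comp_polyB rmorphMn /= comp_polyX.
  congr (_ - _); rewrite rmorph_sum linear_sum; apply: eq_bigr => k _.
  by rewrite !mxE /= comp_polyC polyCM.
rewrite det_mulmx; congr (_ * _).
by rewrite -det_tr linearD /= tr_scalar_mx map_trmx A_skew map_mxN.
Qed.

Lemma mup_char_poly_sqr_skew_even (R : realFieldType) n (A : 'M[R]_n) (a : R) :
  A^T = - A -> a < 0 -> ~~ odd (mup a (char_poly (A *m A))).
Proof.
move=> A_skew a_lt0.
apply: mup_even_of_comp_Xsqr a_lt0 (char_poly_sqr_comp_skew A_skew).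
exact/monic_neq0/char_poly_monic.
Qed.

Section MatrixDerivative.
Variable R : realType.

Definition mx_derive1 m n (F : R -> 'M[R]_(m, n)) (t : R) : 'M[R]_(m, n) :=
  \matrix_(i, j) derive1 (fun s => F s i j) t.

Definition mx_is_derive m n (x : R) (F : R -> 'M[R]_(m, n))
    (dF : 'M[R]_(m, n)) :=
  forall i j, is_derive x 1 (fun t => F t i j) (dF i j).

Lemma mx_derive1P m n (F : R -> 'M[R]_(m, n)) x :
  (forall i j, derivable (fun t => F t i j) x 1) ->
  mx_is_derive x F (mx_derive1 F x).
Proof. by move=> F_derivable i j; rewrite mxE derive1E; apply: derivableP. Qed.

Lemma mx_is_deriveD m n (F G : R -> 'M[R]_(m, n)) x dF dG :
  mx_is_derive x F dF -> mx_is_derive x G dG ->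
  mx_is_derive x (fun t => F t + G t) (dF + dG).
Proof.
move=> dFx dGx i j; rewrite mxE.
have -> : (fun t => (F t + G t) i j) = (fun t => F t i j) + (fun t => G t i j).
  by apply/funext => t; rewrite mxE.
exact: is_deriveD.
Qed.

Lemma mx_is_derive_tr m n (F : R -> 'M[R]_(m, n)) x dF :
  mx_is_derive x F dF -> mx_is_derive x (fun t => (F t)^T) dF^T.
Proof.
move=> dFx i j; rewrite mxE.
have -> : (fun t => (F t)^T i j) = (fun t => F t j i).
  by apply/funext => t; rewrite mxE.
exact: dFx.
Qed.

Lemma mx_is_deriveM m n p (F : R -> 'M[R]_(m, n)) (G : R -> 'M[R]_(n, p))
    x dF dG :
  mx_is_derive x F dF -> mx_is_derive x G dG ->
  mx_is_derive x (fun t => F t *m G t) (dF *m G x + F x *m dG).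
Proof.
move=> dFx dGx i j.
have -> : (fun t => (F t *m G t) i j) =
          \sum_(k < n) ((fun t => F t i k) * (fun t => G t k j)).
  by apply/funext => t; rewrite mxE fct_sumE; apply: eq_bigr => k _.
apply: is_derive_eq; first by apply: is_derive_sum => k; apply: is_deriveM.
rewrite !mxE -big_split /=; apply: eq_bigr => k _.
by rewrite addrC [dF i k * _]mulrC.
Qed.

Lemma mx_is_derive_cst_eq0 m n (F : R -> 'M[R]_(m, n)) (C : 'M[R]_(m, n)) x dF :
  (forall t, F t = C) -> mx_is_derive x F dF -> dF = 0.
Proof.
move=> FE dFx; apply/matrixP => i j; have := dFx i j.
have -> : (fun t => F t i j) = cst (C i j) by apply/funext => t; rewrite FE.
by move=> dFij; rewrite mxE -(derive_val (is_derive := dFij)) derive_cst.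
Qed.

Lemma mx_second_derivE n (F : R -> 'M[R]_n) t :
  mx_second_deriv F t = mx_derive1 (mx_derive1 F) t.
Proof.
apply/matrixP => i j; rewrite !mxE; congr (derive1 _ t).
by apply/funext => s; rewrite mxE.
Qed.

End MatrixDerivative.

Section OrthogonalCurve.
Variables (R : realType) (n : nat) (Q : R -> 'M[R]_n).
Hypothesis Q_orth : forall t, Q t *m (Q t)^T = 1%:M.
Hypothesis Q_derivable : forall t i j, derivable (fun s => Q s i j) t 1.
Hypothesis dQ_derivable :
  forall t i j, derivable (derive1 (fun s => Q s i j)) t 1.

Local Notation Q' := (mx_derive1 Q).
Local Notation Q'' := (mx_derive1 (mx_derive1 Q)).

Let is_derive_Q t : mx_is_derive t Q (Q' t).
Proof. exact: mx_derive1P. Qed.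

Let is_derive_Q' t : mx_is_derive t Q' (Q'' t).
Proof.
apply: mx_derive1P => i j.
have -> : (fun s => Q' s i j) = derive1 (fun s => Q s i j).
  by apply/funext => s; rewrite mxE.
exact: dQ_derivable.
Qed.

Lemma derive_trmx_orth t : (Q' t)^T *m Q t + (Q t)^T *m Q' t = 0.
Proof.
apply: (@mx_is_derive_cst_eq0 _ _ _ (fun s => (Q s)^T *m Q s) 1%:M t).
  by move=> s; apply: mulmx1C.
exact: mx_is_deriveM (mx_is_derive_tr (is_derive_Q t)) (is_derive_Q t).
Qed.

Lemma trmx_mul_derive_skew t :
  ((Q t)^T *m Q' t)^T = - ((Q t)^T *m Q' t).
Proof.
by rewrite trmx_mul trmxK; apply/eqP; rewrite -addr_eq0 derive_trmx_orth.
Qed.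

Lemma msym_trmx_mul_derive2 t :
  msym ((Q t)^T *m Q'' t) = ((Q t)^T *m Q' t) *m ((Q t)^T *m Q' t).
Proof.
set A := (Q t)^T *m Q' t; set X := (Q t)^T *m Q'' t; set Y := (Q' t)^T *m Q' t.
have -> : A *m A = - Y.
  rewrite -{1}(opprK A) -trmx_mul_derive_skew mulNmx /A trmx_mul trmxK.
  by rewrite mulmxA -(mulmxA _ (Q t)) Q_orth mulmx1.
have XT : X^T = (Q'' t)^T *m Q t by rewrite trmx_mul trmxK.
have := mx_is_derive_cst_eq0 derive_trmx_orth (mx_is_deriveD
  (mx_is_deriveM (mx_is_derive_tr (is_derive_Q' t)) (is_derive_Q t))
  (mx_is_deriveM (mx_is_derive_tr (is_derive_Q t)) (is_derive_Q' t))).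
rewrite -XT -/X -/Y [Y + X]addrC addrACA [X^T + X]addrC => /eqP.
rewrite addr_eq0 /msym => /eqP ->.
rewrite -mulr2n scalerN -scalerMnr scalerMnl -mulr_natr.
by rewrite mulVf ?scale1r ?pnatr_eq0.
Qed.

End OrthogonalCurve.

Theorem lemma4 (R : realType) (n : nat) (Q : R -> 'M[R]_n) :
  (0 < n)%N ->
  (forall t, in_SO (Q t)) ->
  (forall i j, C2 (fun t => Q t i j)) ->
  forall tau : R,
    let P := (Q tau)^T *m mx_second_deriv Q tau in
    forall a : R, a < 0 -> eigenvalue (msym P) a ->
      ~~ odd (alg_mult (msym P) a).
Proof.
move=> _ Q_SO Q_C2 tau P a a_lt0 _.
have Q_orth t : Q t *m (Q t)^T = 1%:M by case: (Q_SO t).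
have Q_derivable t i j : derivable (fun s => Q s i j) t 1 by case: (Q_C2 i j).
have dQ_derivable t i j : derivable (derive1 (fun s => Q s i j)) t 1.
  by case: (Q_C2 i j) => _ [].
rewrite /alg_mult /P mx_second_derivE.
rewrite (msym_trmx_mul_derive2 Q_orth Q_derivable dQ_derivable).
apply: mup_char_poly_sqr_skew_even a_lt0.
exact: trmx_mul_derive_skew.
Qed.
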